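(* Let $K$ be a division ring, $R=K[t;\sigma,\delta]$, and let $f,f',g\in R$ be such that $h+Rf'\mapsto hg+Rf$ is a well-defined isomorphism of left $R$-modules $R/Rf'\to R/Rf$. Then $g(x)\neq0$ for every $x\in V(f)$, and $V(f')=\{\phi_g(x)\mid x\in V(f)\}$.
   Context: $K$ is a division ring, $\sigma$ a ring endomorphism of $K$, $\delta$ a $\sigma$-derivation ($\delta$ additive, $\delta(ab)=\sigma(a)\delta(b)+\delta(a)b$); $R=K[t;\sigma,\delta]$ is the Ore extension with $ta=\sigma(a)t+\delta(a)$. For $h\in R$ and $x\in K$, $h(x)$ is the unique element of $K$ with $h-h(x)\in R(t-x)$, and $V(h)=\{x\in K\mid h(x)=0\}$ is the set of right roots of $h$. For $0\ne y\in K$, $x^y:=\sigma(y)xy^{-1}+\delta(y)y^{-1}$, and for $x\notin V(g)$, $\phi_g(x):=x^{g(x)}$. *)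

From HB Require Import structures.
From mathcomp Require Import all_boot all_order all_algebra.
From Stdlib Require Import ClassicalEpsilon.
Set Implicit Arguments. Unset Strict Implicit. Unset Printing Implicit Defensive.
Import GRing.Theory.
Local Open Scope ring_scope.

(* Elements of the Ore extension R = K[t; sigma, delta] are represented by
   their (left) coefficient sequences  sum_i a_i t^i, i.e. by {poly K}
   (only the additive structure of {poly K} is used; the Ore product is
   [omul] below).  The polynomial 'X represents t, c%:P represents c. *)

Section Ore.
Variables (K : unitRingType) (sigma : {rmorphism K -> K}) (delta : {additive K -> K}).

(* left multiplication by t:  t * (a t^i) = sigma(a) t^(i+1) + delta(a) t^i *)
Definition tmul (p : {poly K}) : {poly K} :=
  map_poly sigma p * 'X + map_poly delta p.

Definition omul (p q : {poly K}) : {poly K} :=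
  \sum_(i < size p) (p`_i)%:P * iter (nat_of_ord i) tmul q.

Definition in_lideal (f h : {poly K}) : Prop := exists q, h = omul q f.

(* h(x): the unique c in K with h - c in R (t - x) *)
Definition ore_eval (h : {poly K}) (x : K) : K :=
  epsilon (inhabits 0) (fun c : K => in_lideal ('X - x%:P) (h - c%:P)).

Definition rroots (h : {poly K}) : K -> Prop := fun x => ore_eval h x = 0.

Definition oconj (x y : K) : K := sigma y * x * y^-1 + delta y * y^-1.

Definition phi (g : {poly K}) (x : K) : K := oconj x (ore_eval g x).
End Ore.

(* The proof uses the
   evaluation calculus of right roots:
   - h(x) is the remainder of the right division of h by t - x, so
     x is in V(h) iff h lies in R (t - x);
   - product formula: (h g)(x) = h(x^{g(x)}) g(x) when g(x) is a unit,
     which rests on the identity (t - x^c) c = sigma(c) (t - x);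
   - (y^d)^{d^-1} = y.
   Surjectivity yields g' with g' g = 1 modulo R f, so (g' g)(x) = 1 and
   g(x) != 0 on V(f).  Well-definedness gives f' g in R f, so the product
   formula sends V(f) into V(f') via phi_g.  Injectivity yields g g' = 1
   modulo R f' and f g' in R f'; the same argument with the roles of
   (f, g) and (f', g') swapped sends y in V(f') to phi_{g'}(y) in V(f),
   and phi_g (phi_{g'} y) = y. *)

From Pilot Require Import Defs.
From HB Require Import structures.
From mathcomp Require Import all_boot all_order all_algebra.
From Stdlib Require Import ClassicalEpsilon.
Set Implicit Arguments. Unset Strict Implicit. Unset Printing Implicit Defensive.
Import GRing.Theory.
Local Open Scope ring_scope.

Section OreProduct.
Variables (K : unitRingType) (sigma : {rmorphism K -> K}) (delta : {additive K -> K}).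
Local Notation t := (tmul sigma delta).
Local Notation omul := (omul sigma delta).

Lemma coef_tmul (p : {poly K}) j :
  (t p)`_j = (if j == 0%N then 0 else sigma p`_j.-1) + delta p`_j.
Proof. by rewrite /tmul coefD coefMX !coef_map; case: j. Qed.

Lemma tmul0 : t 0 = 0.
Proof. by rewrite /tmul !map_poly0 mul0r addr0. Qed.

Lemma tmulD (p q : {poly K}) : t (p + q) = t p + t q.
Proof.
rewrite /tmul (raddfD (map_poly sigma)) (raddfD (map_poly delta)).
by rewrite mulrDl addrACA.
Qed.

Lemma tmulB (p q : {poly K}) : t (p - q) = t p - t q.
Proof.
rewrite /tmul (raddfB (map_poly sigma)) (raddfB (map_poly delta)).
by rewrite mulrBl addrACA -opprD.
Qed.

Lemma tmulC c : t c%:P = (sigma c)%:P * 'X + (delta c)%:P.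
Proof. by rewrite /tmul !map_polyC. Qed.

Lemma iter_tmulB i (p q : {poly K}) : iter i t (p - q) = iter i t p - iter i t q.
Proof. by elim: i => //= i ->; rewrite tmulB. Qed.

Lemma omulE (p q : {poly K}) n : (size p <= n)%N ->
  omul p q = \sum_(i < n) p`_i *: iter i t q.
Proof.
move=> le_p_n; rewrite /Defs.omul; under eq_bigr do rewrite mul_polyC.
rewrite (big_ord_widen n (fun i => p`_i *: iter i t q) le_p_n) big_mkcond /=.
apply: eq_bigr => i _; case: ifP => // /negbT; rewrite -leqNgt => le_p_i.
by rewrite nth_default ?scale0r.
Qed.

Lemma omulBr (p q r : {poly K}) : omul p (q - r) = omul p q - omul p r.
Proof.
by rewrite /Defs.omul -sumrB; apply: eq_bigr => i _; rewrite iter_tmulB mulrBr.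
Qed.

Lemma omulDl (p p' q : {poly K}) : omul (p + p') q = omul p q + omul p' q.
Proof.
set n := maxn (size p) (size p').
have le_sum_n : (size (p + p')%R <= n)%N by exact: size_polyD.
rewrite (omulE q le_sum_n).
rewrite (omulE q (leq_maxl (size p) (size p'))).
rewrite (omulE q (leq_maxr (size p) (size p'))) -big_split.
by apply: eq_bigr => i _; rewrite coefD scalerDl.
Qed.

Lemma omulNl (p q : {poly K}) : omul (- p) q = - omul p q.
Proof.
rewrite (omulE q (n := size p)) ?size_polyN // (omulE q (leqnn _)) -sumrN.
by apply: eq_bigr => i _; rewrite coefN scaleNr.
Qed.

Lemma omulBl (p p' q : {poly K}) : omul (p - p') q = omul p q - omul p' q.
Proof. by rewrite omulDl omulNl. Qed.

Lemma omul0l (q : {poly K}) : omul 0 q = 0.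
Proof. by rewrite /Defs.omul size_poly0 big_ord0. Qed.

Lemma omulCl c (q : {poly K}) : omul c%:P q = c *: q.
Proof. by rewrite (omulE q (size_polyC_leq1 c)) big_ord1 coefC. Qed.

Lemma omul1l (q : {poly K}) : omul 1 q = q.
Proof. by rewrite -polyC1 omulCl scale1r. Qed.

Lemma omulZl c (p q : {poly K}) : omul (c *: p) q = c *: omul p q.
Proof.
rewrite (omulE q (size_scale_leq c p)) (omulE q (leqnn _)) scaler_sumr.
by apply: eq_bigr => i _; rewrite coefZ scalerA.
Qed.

(* Right multiplication by 'X in the representation is left multiplication
   by t on the other factor: (p t) q = p (t q). *)
Lemma omulXl (p q : {poly K}) : omul (p * 'X) q = omul p (t q).
Proof.
have le_pX : (size (p * 'X)%R <= (size p).+1)%N.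
  by rewrite (leq_trans (size_polyMleq _ _)) // size_polyX addn2.
rewrite (omulE q le_pX) (omulE (t q) (leqnn _)) big_ord_recl coefMX scale0r add0r.
by apply: eq_bigr => i _; rewrite coefMX -iterSr.
Qed.

Lemma omul_Xn n (q : {poly K}) : omul 'X^n q = iter n t q.
Proof.
elim: n q => [|n IHn] q; first by rewrite expr0 omul1l.
by rewrite exprSr omulXl IHn iterSr.
Qed.
End OreProduct.

Section OreRing.
Variables (K : unitRingType) (sigma : {rmorphism K -> K}) (delta : {additive K -> K}).
Hypothesis delta_mul : forall a b : K, delta (a * b) = sigma a * delta b + delta a * b.
Local Notation t := (tmul sigma delta).
Local Notation omul := (omul sigma delta).

Lemma delta1 : delta 1 = 0.
Proof.
have := delta_mul 1 1; rewrite rmorph1 !mul1r mulr1 => dup.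
by apply: (addrI (delta 1)); rewrite addr0 -dup.
Qed.

Lemma tmulZ c (q : {poly K}) : t (c *: q) = sigma c *: t q + delta c *: q.
Proof.
apply/polyP=> j; rewrite coef_tmul !coefD !coefZ coef_tmul delta_mul.
by case: j => [|j] /=; rewrite ?mulr0 ?add0r // rmorphM mulrDr addrA.
Qed.

Lemma tmul_mulX (p : {poly K}) : t (p * 'X) = t p * 'X.
Proof.
apply/polyP=> j; rewrite coef_tmul !coefMX coef_tmul.
by case: j => [|[|j]] /=; rewrite ?raddf0 ?add0r.
Qed.

Lemma omul_tmul (p q : {poly K}) : omul (t p) q = t (omul p q).
Proof.
elim/poly_ind: p q => [|p c IHp] q; first by rewrite tmul0 omul0l tmul0.
rewrite tmulD tmul_mulX tmulC !omulDl !omulXl !omulCl IHp.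
by rewrite tmulD tmulZ addrA.
Qed.

Lemma omulA (p q r : {poly K}) : omul (omul p q) r = omul p (omul q r).
Proof.
elim/poly_ind: p q => [|p c IHp] q; first by rewrite !omul0l.
by rewrite !omulDl !omulXl !omulCl omulZl IHp omul_tmul.
Qed.

Lemma omul_mulXr (p q : {poly K}) : omul p (q * 'X) = omul p q * 'X.
Proof.
have iter_mulX i (r : {poly K}) : iter i t (r * 'X) = iter i t r * 'X.
  by elim: i => //= i ->; rewrite tmul_mulX.
by rewrite /Defs.omul mulr_suml; apply: eq_bigr => i _; rewrite iter_mulX mulrA.
Qed.

Lemma omulr1 (p : {poly K}) : omul p 1 = p.
Proof.
have t1 : t 1 = 1 * 'X by rewrite -polyC1 tmulC rmorph1 delta1 addr0.
elim/poly_ind: p => [|p c IHp]; first by rewrite omul0l.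
by rewrite omulDl omulXl omulCl t1 omul_mulXr IHp -alg_polyC.
Qed.
End OreRing.

Section RightDivision.
Variables (K : unitRingType) (sigma : {rmorphism K -> K}) (delta : {additive K -> K}).
Variable x : K.
Local Notation t := (tmul sigma delta).
Local Notation omul := (omul sigma delta).
Local Notation I := (in_lideal sigma delta).
Local Notation tXx k := (iter k t ('X - x%:P)).

Lemma iter_tmul_XsubC k : (size (tXx k) <= k.+2)%N /\ (tXx k)`_k.+1 = 1.
Proof.
elim: k => [|k [size_k lead_k]] /=.
  by rewrite size_XsubC coefB coefX coefC subr0.
have high_k j : (k.+2 <= j)%N -> (tXx k)`_j = 0.
  by move=> le_j; apply: nth_default; apply: leq_trans le_j.
split; last by rewrite coef_tmul /= lead_k rmorph1 high_k ?raddf0 ?addr0.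
apply/leq_sizeP => -[|j] // le_j; rewrite coef_tmul /=.
by rewrite !high_k ?raddf0 ?addr0 // ltnW.
Qed.

Lemma coef_omul_XsubC (q : {poly K}) n :
  size q = n.+1 -> (omul q ('X - x%:P))`_n.+1 = q`_n.
Proof.
move=> size_q; rewrite (omulE sigma delta _ (eq_leq size_q)) coef_sum big_ord_recr /=.
rewrite big1 ?add0r => [|i _]; last first.
  rewrite coefZ [(tXx i)`_n.+1]nth_default ?mulr0 //.
  have [size_i _] := iter_tmul_XsubC i.
  by rewrite (leq_trans size_i) // ltnS.
by rewrite coefZ (proj2 (iter_tmul_XsubC n)) mulr1.
Qed.

Lemma omul_XsubC_constant (q : {poly K}) c : omul q ('X - x%:P) = c%:P -> q = 0.
Proof.
move=> qXc; apply/eqP; apply: contraT => q_neq0.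
have size_q : size q = (size q).-1.+1 by rewrite prednK // size_poly_gt0.
have := coef_omul_XsubC size_q; rewrite qXc coefC /= => /esym/eqP.
by rewrite -lead_coefE lead_coef_eq0 (negbTE q_neq0).
Qed.

Lemma right_division (h : {poly K}) : exists q c, h = omul q ('X - x%:P) + c%:P.
Proof.
have [n size_h] : exists n, (size h <= n.+1)%N by exists (size h).
elim: n h size_h => [|n IHn] h size_h.
  by exists 0, h`_0; rewrite omul0l add0r -size1_polyC.
pose a := h`_n.+1; have [size_n lead_n] := iter_tmul_XsubC n.
have size_rest : (size (h - a *: tXx n)%R <= n.+1)%N.
  apply/leq_sizeP => j; rewrite leq_eqVlt => /orP[/eqP <-|lt_j].
    by rewrite coefB coefZ lead_n mulr1 subrr.
  by rewrite coefB coefZ !nth_default ?mulr0 ?subrr // (leq_trans _ lt_j).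
have [q [c def_rest]] := IHn _ size_rest.
exists (q + a *: 'X^n), c.
by rewrite omulDl omulZl omul_Xn -addrAC -def_rest subrK.
Qed.

Lemma ore_evalP (h : {poly K}) c :
  I ('X - x%:P) (h - c%:P) -> ore_eval sigma delta h x = c.
Proof.
move=> [q def_q].
have : exists c, I ('X - x%:P) (h - c%:P) by exists c, q.
move=> /(epsilon_spec (inhabits 0)) [q' def_q'].
have eq_const : omul (q' - q) ('X - x%:P) = (c - ore_eval sigma delta h x)%:P.
  by rewrite omulBl -def_q -def_q' polyCB opprB addrC addrA subrK addrC.
have q_eq : q' - q = 0 := omul_XsubC_constant eq_const.
move: eq_const; rewrite q_eq omul0l => /esym/eqP.
by rewrite polyC_eq0 subr_eq0 => /eqP.
Qed.

Lemma ore_eval_spec (h : {poly K}) : I ('X - x%:P) (h - (ore_eval sigma delta h x)%:P).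
Proof.
have [q [c def_h]] := right_division h.
apply: (epsilon_spec (inhabits 0) (fun c => I ('X - x%:P) (h - c%:P))).
by exists c, q; rewrite def_h addrK.
Qed.
End RightDivision.

Section LeftIdeals.
Variables (K : unitRingType) (sigma : {rmorphism K -> K}) (delta : {additive K -> K}).
Hypothesis delta_mul : forall a b : K, delta (a * b) = sigma a * delta b + delta a * b.
Local Notation omul := (omul sigma delta).
Local Notation I := (in_lideal sigma delta).

Lemma lideal_refl (f : {poly K}) : I f f.
Proof. by exists 1; rewrite omul1l. Qed.

Lemma lideal_opp (f a : {poly K}) : I f a -> I f (- a).
Proof. by move=> [q ->]; exists (- q); rewrite omulNl. Qed.

Lemma lideal_sub (f a b : {poly K}) : I f a -> I f b -> I f (a - b).
Proof. by move=> [q ->] [q' ->]; exists (q - q'); rewrite omulBl. Qed.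

Lemma lideal_mull (f h a : {poly K}) : I f a -> I f (omul h a).
Proof. by move=> [q ->]; exists (omul h q); rewrite omulA. Qed.

Lemma lideal_trans (f g a : {poly K}) : I f a -> I g f -> I g a.
Proof. by move=> [q ->] [q' ->]; exists (omul q q'); rewrite omulA. Qed.

Lemma rrootsP (f : {poly K}) x : rroots sigma delta f x <-> I ('X - x%:P) f.
Proof.
split=> [f_x | Xx_f]; last by apply: ore_evalP; rewrite subr0.
by have := ore_eval_spec sigma delta x f; rewrite f_x subr0.
Qed.
End LeftIdeals.

Section EvaluationOfProducts.
Variables (K : unitRingType) (sigma : {rmorphism K -> K}) (delta : {additive K -> K}).
Hypothesis delta_mul : forall a b : K, delta (a * b) = sigma a * delta b + delta a * b.
Local Notation omul := (omul sigma delta).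
Local Notation eval := (ore_eval sigma delta).
Local Notation oconj := (oconj sigma delta).

Lemma oconj_mul x c : c \is a GRing.unit -> oconj x c * c = sigma c * x + delta c.
Proof. by move=> c_unit; rewrite /Defs.oconj mulrDl !divrK. Qed.

(* The defining identity of x^c:  (t - x^c) c = sigma(c) (t - x). *)
Lemma omul_XsubC_oconj x c : c \is a GRing.unit ->
  omul ('X - (oconj x c)%:P) c%:P = omul (sigma c)%:P ('X - x%:P).
Proof.
move=> c_unit; rewrite omulBl -['X]expr1 omul_Xn !omulCl /= tmulC.
rewrite scalerBr !scale_polyC oconj_mul // polyCD opprD addrACA subrr addr0.
by rewrite expr1 mul_polyC.
Qed.

Lemma ore_eval_mul_unit (h g : {poly K}) x : eval g x \is a GRing.unit ->
  eval (omul h g) x = eval h (oconj x (eval g x)) * eval g x.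
Proof.
set c := eval g x; set y := oconj x c => c_unit.
have [q def_g] := ore_eval_spec sigma delta x g.
have [q' def_h] := ore_eval_spec sigma delta y h.
apply: ore_evalP; exists (omul h q + omul q' (sigma c)%:P).
rewrite omulDl !(omulA delta_mul) -omul_XsubC_oconj //.
rewrite -(omulA delta_mul q') -def_g -def_h.
by rewrite omulBr omulBl omulCl scale_polyC addrA subrK.
Qed.

Lemma ore_eval_mul_root (h g : {poly K}) x : eval g x = 0 -> eval (omul h g) x = 0.
Proof. by move=> /rrootsP g_x; apply/rrootsP; apply: lideal_mull. Qed.

Lemma oconjK y d : d \is a GRing.unit -> oconj (oconj y d) d^-1 = y.
Proof.
move=> d_unit; rewrite /Defs.oconj invrK mulrDr mulrDl -!mulrA mulVr // mulr1.
rewrite !mulrA -rmorphM mulVr // rmorph1 mul1r mulr1 -addrA -delta_mul.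
by rewrite mulVr // (delta1 delta_mul) addr0.
Qed.
End EvaluationOfProducts.

Section RootTransfer.
Variables (K : unitRingType) (sigma : {rmorphism K -> K}) (delta : {additive K -> K}).
Hypothesis delta_mul : forall a b : K, delta (a * b) = sigma a * delta b + delta a * b.
Local Notation omul := (omul sigma delta).
Local Notation eval := (ore_eval sigma delta).
Local Notation I := (in_lideal sigma delta).
Local Notation V := (rroots sigma delta).

Lemma ore_eval_left_inverse (f g h : {poly K}) x :
  I f (1 - omul h g) -> V f x -> eval (omul h g) x = 1.
Proof.
move=> inv_hg /rrootsP f_x; apply: ore_evalP.
rewrite polyC1 -[_ - 1]opprB; apply: lideal_opp.
by apply: (lideal_trans delta_mul inv_hg).
Qed.

Lemma left_invertible_eval_neq0 (f g h : {poly K}) x :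
  I f (1 - omul h g) -> V f x -> eval g x != 0.
Proof.
move=> inv_hg f_x; apply/eqP => g_x.
have := ore_eval_left_inverse inv_hg f_x.
by rewrite (ore_eval_mul_root delta_mul h g_x) => /eqP; rewrite eq_sym oner_eq0.
Qed.

Lemma rroots_phi (f f' g : {poly K}) x :
  I f (omul f' g) -> V f x -> eval g x \is a GRing.unit -> V f' (phi sigma delta g x).
Proof.
move=> f'g_in_Rf /rrootsP f_x g_unit.
have /rrootsP := lideal_trans delta_mul f'g_in_Rf f_x.
rewrite /rroots (ore_eval_mul_unit delta_mul _ g_unit) => prod_eq0.
by rewrite /rroots /phi -[LHS](mulrK g_unit) prod_eq0 mul0r.
Qed.

Lemma phi_left_inverse (g g' : {poly K}) y :
  eval (omul g g') y = 1 -> eval g' y \is a GRing.unit ->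
  phi sigma delta g (phi sigma delta g' y) = y.
Proof.
move=> gg'_y d_unit; rewrite /phi.
have -> : eval g (oconj sigma delta y (eval g' y)) = (eval g' y)^-1.
  by apply: (mulIr d_unit); rewrite -ore_eval_mul_unit // gg'_y mulVr.
exact: oconjK.
Qed.

Lemma iso_inverse_relations (f f' g g' : {poly K}) :
  (forall h1 h2, I f (omul h1 g - omul h2 g) -> I f' (h1 - h2)) ->
  I f (1 - omul g' g) -> I f' (1 - omul g g') /\ I f' (omul f g').
Proof.
move=> inj inv_g'g; split.
  rewrite -opprB; apply/lideal_opp/inj.
  have -> : omul (omul g g') g - omul 1 g = - omul g (1 - omul g' g).
    by rewrite (omulA delta_mul) omulBr (omulr1 delta_mul) omul1l opprB.
  exact/lideal_opp/(lideal_mull delta_mul).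
rewrite -[omul f g']subr0; apply: inj.
have -> : omul (omul f g') g - omul 0 g = f - omul f (1 - omul g' g).
  rewrite omul0l subr0 (omulA delta_mul) omulBr (omulr1 delta_mul).
  by rewrite opprB addrC subrK.
by apply: lideal_sub; [apply: lideal_refl | apply: (lideal_mull delta_mul)].
Qed.
End RootTransfer.

Theorem corollary1p17
  (K : unitRingType)
  (Kdiv : forall a : K, a != 0 -> a \is a GRing.unit)
  (sigma : {rmorphism K -> K}) (delta : {additive K -> K})
  (delta_mul : forall a b : K, delta (a * b) = sigma a * delta b + delta a * b)
  (f f' g : {poly K})
  (* h + R f' |-> h g + R f is well defined *)
  (Hwd : forall h1 h2 : {poly K}, in_lideal sigma delta f' (h1 - h2) ->
           in_lideal sigma delta f (omul sigma delta h1 g - omul sigma delta h2 g))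
  (* ... injective *)
  (Hinj : forall h1 h2 : {poly K},
           in_lideal sigma delta f (omul sigma delta h1 g - omul sigma delta h2 g) ->
           in_lideal sigma delta f' (h1 - h2))
  (* ... surjective *)
  (Hsurj : forall k : {poly K}, exists h : {poly K},
           in_lideal sigma delta f (k - omul sigma delta h g)) :
  (forall x : K, rroots sigma delta f x -> ore_eval sigma delta g x != 0) /\
  (forall y : K, rroots sigma delta f' y <->
     exists2 x : K, rroots sigma delta f x & y = phi sigma delta g x).
Proof.
have [g' inv_g'g] := Hsurj 1.
have g_neq0 x : rroots sigma delta f x -> ore_eval sigma delta g x != 0.
  exact: (left_invertible_eval_neq0 delta_mul inv_g'g).
split=> // y; split=> [f'_y | [x f_x ->]].
- have [inv_gg' fg'_in_Rf'] := iso_inverse_relations delta_mul Hinj inv_g'g.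
  have g'_unit := Kdiv _ (left_invertible_eval_neq0 delta_mul inv_gg' f'_y).
  exists (phi sigma delta g' y); first exact: rroots_phi fg'_in_Rf' f'_y g'_unit.
  by rewrite phi_left_inverse // (ore_eval_left_inverse delta_mul inv_gg' f'_y).
-
  have f'g_in_Rf : in_lideal sigma delta f (omul sigma delta f' g).
    by have := Hwd f' 0; rewrite subr0 omul0l subr0; apply; apply: lideal_refl.
  exact: rroots_phi f'g_in_Rf f_x (Kdiv _ (g_neq0 x f_x)).
Qed.
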